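(* Consider the following random variables, all defined on a common probability space (one draw from a superpopulation): a binary decision (plan) variable $P\in\{0,1\}$; a binary treatment at time 2, $A_2\in\{0,1\}$; real-valued outcomes $Y_1,Y_2$ with finite expectations; and, for $p^*\in\{0,1\}$, potential outcomes $Y_1^{p=p^*}, Y_2^{p=p^*}, A_2^{p=p^*}$ (values had $P$ been set to $p^*$). Suppose that: (i) $\Pr(A_2=a^* )>0$ for every $a^*\in\{0,1\}$; (ii) $A_2^{p=p^*}=p^*$ for every $p^*\in\{0,1\}$; (iii) $\mathbb{E}(Y_1^{p=1}\mid P=1)=\mathbb{E}(Y_1^{p=0}\mid P=1)$; (iv) $\mathbb{E}(Y_2^{p=0}-Y_1^{p=0}\mid P=1)=\mathbb{E}(Y_2^{p=0}-Y_1^{p=0}\mid P=0)$; (v) for each $p^*\in\{0,1\}$: $Y_1^{p=p^*}=Y_1$, $Y_2^{p=p^*}=Y_2$ and $A_2^{p=p^*}=A_2$ on the event $\{P=p^*\}$. Then \[ATT_P=\{\mathbb{E}(Y_2\mid A_2=1)-\mathbb{E}(Y_1\mid A_2=1)\}-\{\mathbb{E}(Y_2\mid A_2=0)-\mathbb{E}(Y_1\mid A_2=0)\},\] where $ATT_P=\mathbb{E}(Y_2^{p=1}-Y_2^{p=0}\mid P=1)$.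
   Context: Difference-in-differences setting with two time points. Superscripts denote potential outcomes (counterfactual values under a hypothetical intervention fixing $P$ to the indicated value). $P$ represents the decision/plan to implement a policy, $A_2$ its implementation at time 2 (no unit is treated at time 1), and $Y_1,Y_2$ the outcome measured at times 1 and 2. *)

From HB Require Import structures.
From mathcomp Require Import all_boot all_order all_algebra.
From mathcomp Require Import all_classical all_reals all_analysis.
Set Implicit Arguments. Unset Strict Implicit. Unset Printing Implicit Defensive.
Import Order.TTheory GRing.Theory Num.Theory.
Local Open Scope classical_set_scope.
Local Open Scope ring_scope.

Definition cond_exp d (T : measurableType d) (R : realType)
  (Pr : probability T R) (X : T -> R) (B : set T) : R :=
  fine (\int[Pr]_(w in B) (X w)%:E) / fine (Pr B).

Definition evt (T : Type) (R : realType) (V : T -> R) (v : R) : set T :=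
  [set w | V w = v].

(* Under (ii) and (v), the treatment coincides almost surely with the plan, so
   conditioning on {A2 = a} is conditioning on {P = a}; by consistency (v) the
   observed outcomes on {P = p} are the potential outcomes Y^{p}.  The right-hand
   side is therefore E(Y2^1 - Y1^1 | P = 1) - E(Y2^0 - Y1^0 | P = 0), and (iv)
   followed by (iii) turns it into E(Y2^1 - Y2^0 | P = 1). *)

From HB Require Import structures.
From mathcomp Require Import all_boot all_order all_algebra.
From mathcomp Require Import all_classical all_reals all_analysis.
From mathcomp Require Import measurable_realfun lra.
Import Order.TTheory GRing.Theory Num.Theory.
Local Open Scope classical_set_scope.
Local Open Scope ring_scope.
Set Implicit Arguments. Unset Strict Implicit.

Section conditional_expectation.
Context d (T : measurableType d) (R : realType) (Pr : probability T R).

Lemma measurable_evt (V : T -> R) (v : R) :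
  measurable_fun setT V -> measurable (evt V v).
Proof. by move=> mV; rewrite -[evt V v]setTI; exact: mV (measurable_set1 v). Qed.

Lemma cond_expB (X Y : T -> R) (B : set T) : measurable B ->
  Pr.-integrable setT (EFin \o X) -> Pr.-integrable setT (EFin \o Y) ->
  cond_exp Pr (X \- Y) B = cond_exp Pr X B - cond_exp Pr Y B.
Proof.
move=> mB iX iY.
have iXB := integrableS measurableT mB (subsetT B) iX.
have iYB := integrableS measurableT mB (subsetT B) iY.
rewrite /cond_exp -mulrBl integralB_EFin //.
by rewrite fineB //; exact: integrable_fin_num.
Qed.

Lemma cond_exp_ae_eq (X Y : T -> R) (B : set T) : measurable B ->
  measurable_fun setT (EFin \o X : T -> \bar R) ->
  measurable_fun setT (EFin \o Y : T -> \bar R) ->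
  {ae Pr, forall w, B w -> X w = Y w} ->
  cond_exp Pr X B = cond_exp Pr Y B.
Proof.
move=> mB mX mY XY; rewrite /cond_exp; congr (fine _ / _).
apply: ae_eq_integral => //; [exact: measurable_funTS|exact: measurable_funTS|].
by apply: filterS XY => w XYw /XYw /= ->.
Qed.

Lemma integral_ae_eq_set (f : T -> \bar R) (A B : set T) :
  measurable A -> measurable B -> measurable_fun setT f ->
  {ae Pr, forall w, A w = B w} ->
  (\int[Pr]_(w in A) f w = \int[Pr]_(w in B) f w)%E.
Proof.
move=> mA mB mf AB; rewrite (integral_mkcond A) (integral_mkcond B).
apply: ae_eq_integral => //.
- exact/(measurable_restrictT f mA)/measurable_funTS.
- exact/(measurable_restrictT f mB)/measurable_funTS.
- apply: filterS AB => w ABw _.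
  have AB_in : (w \in A) = (w \in B) by apply/idP/idP; rewrite !in_setE ABw.
  by rewrite /patch AB_in.
Qed.

Lemma cond_exp_ae_eq_set (X : T -> R) (A B : set T) :
  measurable A -> measurable B -> measurable_fun setT (EFin \o X : T -> \bar R) ->
  {ae Pr, forall w, A w = B w} ->
  cond_exp Pr X A = cond_exp Pr X B.
Proof.
move=> mA mB mX AB; rewrite /cond_exp (integral_ae_eq_set mA mB mX AB).
have PrAB : Pr A = Pr B.
  have := integral_ae_eq_set mA mB (measurable_cst 1%E) AB.
  by rewrite !integral_cst // !mul1e.
by rewrite PrAB.
Qed.

Lemma treatment_ae_eq_plan (P A2 : T -> R) (A2p : bool -> T -> R) :
  (forall w, P w = 0 \/ P w = 1) ->
  (forall b : bool, {ae Pr, forall w, A2p b w = b%:R}) ->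
  (forall b : bool, {ae Pr, forall w, P w = b%:R -> A2p b w = A2 w}) ->
  {ae Pr, forall w, A2 w = P w}.
Proof.
move=> P01 A2p_b A2p_A2.
apply: filterS (filterI (filterI (A2p_b false) (A2p_b true))
                        (filterI (A2p_A2 false) (A2p_A2 true))).
move=> w [[A2p0 A2p1] [A2_A2p0 A2_A2p1]].
have [Pw|Pw] := P01 w.
- by rewrite -(A2_A2p0 Pw) A2p0 Pw.
- by rewrite -(A2_A2p1 Pw) A2p1 Pw.
Qed.

End conditional_expectation.

Theorem proposition2 (d : measure_display) (T : measurableType d) (R : realType)
  (Pr : probability T R)
  (P A2 Y1 Y2 : T -> R)
  (Y1p Y2p A2p : bool -> T -> R)
  (mP : measurable_fun setT P) (mA2 : measurable_fun setT A2)
  (P01 : forall w, P w = 0 \/ P w = 1)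
  (A201 : forall w, A2 w = 0 \/ A2 w = 1)
  (iY1 : Pr.-integrable setT (EFin \o Y1))
  (iY2 : Pr.-integrable setT (EFin \o Y2))
  (iY1p : forall b, Pr.-integrable setT (EFin \o Y1p b))
  (iY2p : forall b, Pr.-integrable setT (EFin \o Y2p b))
  (mA2p : forall b, measurable_fun setT (A2p b))
  (* (i) positivity *)
  (H1 : forall a : bool, (0 < Pr (evt A2 a%:R))%E)
  (* (ii) A_2^{p=p*} = p* *)
  (H2 : forall b : bool, {ae Pr, forall w, A2p b w = b%:R})
  (* (iii) *)
  (H3 : cond_exp Pr (Y1p true) (evt P 1) = cond_exp Pr (Y1p false) (evt P 1))
  (* (iv) parallel trends *)
  (H4 : cond_exp Pr (Y2p false \- Y1p false) (evt P 1)
        = cond_exp Pr (Y2p false \- Y1p false) (evt P 0))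
  (* (v) consistency *)
  (H5 : forall b : bool, {ae Pr, forall w, P w = b%:R ->
          [/\ Y1p b w = Y1 w, Y2p b w = Y2 w & A2p b w = A2 w]}) :
  cond_exp Pr (Y2p true \- Y2p false) (evt P 1)
  = (cond_exp Pr Y2 (evt A2 1) - cond_exp Pr Y1 (evt A2 1))
    - (cond_exp Pr Y2 (evt A2 0) - cond_exp Pr Y1 (evt A2 0)).
Proof.
have mEFin (X : T -> R) : Pr.-integrable setT (EFin \o X) ->
    measurable_fun setT (EFin \o X : T -> \bar R).
  exact: measurable_int.
have [mY1 mY2] := (mEFin _ iY1, mEFin _ iY2).
have mPv v := measurable_evt v mP.
have A2_P : {ae Pr, forall w, A2 w = P w}.
  apply: (treatment_ae_eq_plan P01 H2) => b.
  by apply: filterS (H5 b) => w H5w /H5w [].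
have evtA2P v : {ae Pr, forall w, evt A2 v w = evt P v w}.
  by apply: filterS A2_P => w /= A2w; rewrite /evt /= A2w.
rewrite !(cond_exp_ae_eq_set (measurable_evt _ mA2) (mPv _) _ (evtA2P _)) //.
have observed_potential (b : bool) :
    cond_exp Pr Y1 (evt P b%:R) = cond_exp Pr (Y1p b) (evt P b%:R) /\
    cond_exp Pr Y2 (evt P b%:R) = cond_exp Pr (Y2p b) (evt P b%:R).
  split; apply: cond_exp_ae_eq (mPv _) _ (mEFin _ _) _ => //;
    by apply: filterS (H5 b) => w H5w /H5w [].
have [-> ->] := observed_potential true.
have [-> ->] := observed_potential false.
have cond_expB_P v X Y := @cond_expB _ _ _ Pr X Y (evt P v) (mPv v).
move: H4; rewrite !cond_expB_P // H3.
lra.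
Qed.
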